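(* Let $m,n$ be positive integers and let $B=(B(i_1,\dots,i_{2m}))_{1\le i_1,\dots,i_{2m}\le 2n}$ change sign when $i_{2s-1}$ and $i_{2s}$ are interchanged, for each $1\le s\le m$. Let $M=(M(i_1,\dots,i_{2m}))_{1\le i_1,\dots,i_{2m}\le 2mn}$ be the fully antisymmetric array (i.e. $M(i_{\tau(1)},\dots,i_{\tau(2m)})=\mathrm{sgn}(\tau)M(i_1,\dots,i_{2m})$ for all $\tau\in\mathfrak{S}_{2m}$) determined by the following values for $i_1<\cdots<i_{2m}$: if there exist $1\le r_1,\dots,r_{2m}\le 2n$ with $i_{2s-1}=2n(s-1)+r_{2s-1}$ and $i_{2s}=2n(s-1)+r_{2s}$ for all $1\le s\le m$, then $M(i_1,\dots,i_{2m})=B(r_1,\dots,r_{2m})$; otherwise $M(i_1,\dots,i_{2m})=0$. Then $\mathrm{Pf}^{[2m]}(B)=\mathrm{BPf}^{[2m]}(M)$.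
   Context: With $\mathfrak{E}_{2n}=\{\sigma\in\mathfrak{S}_{2n}:\sigma(2i-1)<\sigma(2i),\ 1\le i\le n\}$, $\mathrm{Pf}^{[2m]}(B):=\frac{1}{n!}\sum_{\sigma_1,\dots,\sigma_m\in\mathfrak{E}_{2n}}\prod_s\mathrm{sgn}(\sigma_s)\prod_{i=1}^nB(\sigma_1(2i-1),\sigma_1(2i),\dots,\sigma_m(2i-1),\sigma_m(2i))$. Barvinok's hyperpfaffian of a fully antisymmetric array $M$ indexed by $\{1,\dots,2mn\}^{2m}$: with $\mathfrak{E}_{2mn,2m}=\{\sigma\in\mathfrak{S}_{2mn}:\sigma(2m(i-1)+1)<\sigma(2m(i-1)+2)<\cdots<\sigma(2mi),\ 1\le i\le n\}$, $$\mathrm{BPf}^{[2m]}(M):=\frac{1}{n!}\sum_{\sigma\in\mathfrak{E}_{2mn,2m}}\mathrm{sgn}(\sigma)\prod_{i=1}^nM(\sigma(2m(i-1)+1),\dots,\sigma(2mi)).$$ *)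

From HB Require Import structures.
From mathcomp Require Import all_boot all_order all_algebra all_fingroup.
From mathcomp Require Import zify.
Set Implicit Arguments. Unset Strict Implicit. Unset Printing Implicit Defensive.
Import GRing.Theory.

(* All indices are 0-based: the paper's index 1..N becomes 'I_N = {0..N-1}. *)

Lemma idx_proof (a b : nat) (i : 'I_b) (j : 'I_a) : a * i + j < a * b.
Proof. case: i j => i Hi [j Hj] /=. nia. Qed.

(* idx a b i j = a*i + j : the j-th position of the i-th block of length a *)
Definition idx (a b : nat) (i : 'I_b) (j : 'I_a) : 'I_(a * b) :=
  Ordinal (idx_proof i j).

Lemma divord_proof (a b : nat) (k : 'I_(a * b)) : k %/ a < b.
Proof.
case: k => k Hk /=; case: a Hk => [|a] Hk; first by rewrite mul0n in Hk.
by rewrite ltn_divLR // mulnC.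
Qed.

Lemma modord_proof (a b : nat) (k : 'I_(a * b)) : k %% a < a.
Proof.
case: k => k Hk /=; case: a Hk => [|a] Hk; first by rewrite mul0n in Hk.
by rewrite ltn_mod.
Qed.

Definition divord (a b : nat) (k : 'I_(a * b)) : 'I_b := Ordinal (divord_proof k).
Definition modord (a b : nat) (k : 'I_(a * b)) : 'I_a := Ordinal (modord_proof k).

Definition blockInc (k n : nat) (s : {perm 'I_(k * n)}) : bool :=
  [forall i : 'I_n, forall j1 : 'I_k, forall j2 : 'I_k,
     (j1 < j2) ==> (s (idx i j1) < s (idx i j2))].

Definition psgn (R : ringType) (T : finType) (s : {perm T}) : R := (-1) ^+ odd_perm s.

Definition Pf2m (R : fieldType) (m n : nat)
    (B : {ffun 'I_(2 * m) -> 'I_(2 * n)} -> R) : R :=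
  (n`!%:R)^-1 *
  \sum_(sig : {ffun 'I_m -> {perm 'I_(2 * n)}} | [forall s, blockInc (sig s)])
    ((\prod_(s < m) psgn R (sig s)) *
     \prod_(i < n) B [ffun k : 'I_(2 * m) =>
                        sig (divord k) (idx i (modord k))]).

Definition BPf2m (R : fieldType) (m n : nat)
    (M : {ffun 'I_(2 * m) -> 'I_((2 * m) * n)} -> R) : R :=
  (n`!%:R)^-1 *
  \sum_(sig : {perm 'I_((2 * m) * n)} | blockInc sig)
    (psgn R sig * \prod_(i < n) M [ffun j : 'I_(2 * m) => sig (idx i j)]).

From HB Require Import structures.
From mathcomp Require Import all_boot all_order all_algebra all_fingroup.
From mathcomp Require Import zify.
From Stdlib Require Import Classical.
Import GRing.Theory.
Set Implicit Arguments. Unset Strict Implicit. Unset Printing Implicit Defensive.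

(* Write a position of [1..2mn] as (i, s, b) (block i of BPf, pair s inside the
   block, parity b) and split the values into m segments of length 2n.  The map
   Phi sending (sigma_1, ..., sigma_m) to (i, s, b) |-> 2n s + sigma_s (2i + b)
   is a bijection from E_2n^m onto those sigma in E_2mn,2m each of whose blocks
   puts its pair s into segment s; there the product of the M's is the product
   of the B's, and every other sigma in E_2mn,2m has a block on which M vanishes.
   Phi sigma is the product of the sigma_s, acting on disjoint segments, after a
   fixed shuffle that acts by the same permutation on even and on odd positions,
   so sgn (Phi sigma) = prod_s sgn sigma_s.  Only values of M at increasing
   tuples enter BPf, so the antisymmetry of B and M is never used. *)

Section ExtPerm.
Local Open Scope group_scope.
Variables (T U : finType) (e : T -> U).
Hypothesis e_inj : injective e.

Definition ext_fun (p : {perm T}) (u : U) : U :=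
  if [pick x | e x == u] is Some x then e (p x) else u.

Lemma ext_fun_inj p : injective (ext_fun p).
Proof.
move=> u v; rewrite /ext_fun.
case: pickP => [x /eqP <-|Hu]; case: pickP => [y /eqP <-|Hv].
- by move/e_inj/perm_inj->.
- by move=> E; move: (Hv (p x)); rewrite E eqxx.
- by move=> E; move: (Hu (p y)); rewrite -E eqxx.
- by [].
Qed.

Definition ext_perm (p : {perm T}) : {perm U} := perm (@ext_fun_inj p).

Lemma ext_permE p x : ext_perm p (e x) = e (p x).
Proof.
rewrite permE /ext_fun; case: pickP => [y /eqP /e_inj -> //|/(_ x)].
by rewrite eqxx.
Qed.

Lemma ext_perm_out p u : u \notin codom e -> ext_perm p u = u.
Proof.
move=> Hu; rewrite permE /ext_fun; case: pickP => // x /eqP Exu.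
by rewrite -Exu codom_f in Hu.
Qed.

Lemma ext_permM p q : ext_perm (p * q) = ext_perm p * ext_perm q.
Proof.
apply/permP => u; rewrite permM.
have [/codomP[x ->]|Hu] := boolP (u \in codom e); first by rewrite !ext_permE permM.
by rewrite !ext_perm_out.
Qed.

Lemma ext_perm1 : ext_perm 1 = 1.
Proof.
apply/permP => u; have [/codomP[x ->]|Hu] := boolP (u \in codom e).
  by rewrite ext_permE !perm1.
by rewrite ext_perm_out ?perm1.
Qed.

Lemma ext_perm_tperm x y : ext_perm (tperm x y) = tperm (e x) (e y).
Proof.
apply/permP => u; have [/codomP[z ->]|Hu] := boolP (u \in codom e).
  rewrite ext_permE; case: tpermP => [->|->|zx zy]; rewrite ?tpermL ?tpermR //.
  by rewrite tpermD // (inj_eq e_inj) eq_sym; apply/eqP.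
by rewrite ext_perm_out // tpermD //; apply: contraNneq Hu => <-; apply: codom_f.
Qed.

Lemma odd_ext_perm p : odd_perm (ext_perm p) = odd_perm p.
Proof.
have [ts -> dts] := prod_tpermP p.
have -> : ext_perm (\prod_(t <- ts) tperm t.1 t.2) =
          \prod_(t <- [seq (e t.1, e t.2) | t <- ts]) tperm t.1 t.2.
  elim: ts {dts} => [|t ts IH]; first by rewrite !big_nil ext_perm1.
  by rewrite /= !big_cons ext_permM ext_perm_tperm IH.
rewrite !odd_perm_prod ?size_map // all_map.
by apply: sub_all dts => t /=; rewrite (inj_eq e_inj).
Qed.

End ExtPerm.

Lemma perm_prod_blockwise (I : eqType) (U : finType) (blk : U -> I)
    (F : I -> {perm U}) :
    (forall i x, blk x != i -> F i x = x) -> (forall i x, blk (F i x) = blk x) ->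
  forall (r : seq I) x, uniq r ->
    (\prod_(i <- r) F i)%g x = if blk x \in r then F (blk x) x else x.
Proof.
move=> Fout Fblk; elim=> [|i r IH] x /=; first by rewrite big_nil perm1.
case/andP=> ir ur; rewrite big_cons permM in_cons.
have [xi|xi] /= := eqVneq (blk x) i; first by rewrite IH // Fblk xi (negbTE ir).
by rewrite Fout // IH.
Qed.

Section Blocks.
Variables a b : nat.

Lemma idx_divmod (k : 'I_(a * b)) : idx (divord k) (modord k) = k.
Proof. by apply: val_inj; rewrite /= mulnC -divn_eq. Qed.

Lemma divord_idx (i : 'I_b) (j : 'I_a) : divord (idx i j) = i.
Proof.
apply: val_inj => /=; have ja := ltn_ord j.
by rewrite mulnC divnMDl ?divn_small ?addn0 //; lia.
Qed.

Lemma modord_idx (i : 'I_b) (j : 'I_a) : modord (idx i j) = j.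
Proof. by apply: val_inj; rewrite /= mulnC modnMDl modn_small. Qed.

Definition swap_ord (k : 'I_(a * b)) : 'I_(b * a) := idx (modord k) (divord k).

End Blocks.

Lemma swap_ordK a b : cancel (@swap_ord a b) (@swap_ord b a).
Proof. by move=> k; rewrite /swap_ord divord_idx modord_idx idx_divmod. Qed.

Lemma psgnM (R : nzRingType) (T : finType) (s t : {perm T}) :
  psgn R (s * t)%g = (psgn R s * psgn R t)%R.
Proof. by rewrite /psgn odd_permM signr_addb. Qed.

Lemma psgn1 (R : nzRingType) (T : finType) : psgn R (1 : {perm T})%g = 1%R.
Proof. by rewrite /psgn odd_perm1. Qed.

Lemma blockIncP (k n : nat) (s : {perm 'I_(k * n)}) :
  reflect (forall (i : 'I_n) (j1 j2 : 'I_k), j1 < j2 -> s (idx i j1) < s (idx i j2))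
          (blockInc s).
Proof.
apply: (iffP forallP) => [H i j1 j2 lt12 | H i].
  by move/forallP/(_ j1)/forallP/(_ j2)/implyP: (H i); apply.
by apply/forallP => j1; apply/forallP => j2; apply/implyP; apply: H.
Qed.

Definition block (k n : nat) (s : {perm 'I_(k * n)}) (i : 'I_n) :
    {ffun 'I_k -> 'I_(k * n)} := [ffun j => s (idx i j)].

Lemma block_increasing (k n : nat) (s : {perm 'I_(k * n)}) (i : 'I_n) :
  blockInc s -> {homo block s i : j1 j2 / j1 < j2}.
Proof. by move=> /blockIncP sE j1 j2 lt12; rewrite !ffunE; apply: sE. Qed.

Section Segments.
Variables m n : nat.

Definition seg (s : 'I_m) (x : 'I_(2 * n)) : 'I_(2 * m * n) :=
  cast_ord (mulnAC 2 n m) (idx s x).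

Definition unseg (k : 'I_(2 * m * n)) : 'I_(2 * n * m) :=
  cast_ord (esym (mulnAC 2 n m)) k.

Definition seg_num (k : 'I_(2 * m * n)) : 'I_m := divord (unseg k).
Definition seg_off (k : 'I_(2 * m * n)) : 'I_(2 * n) := modord (unseg k).

Lemma val_seg s x : val (seg s x) = 2 * n * s + x.
Proof. by []. Qed.

Lemma seg_inj s : injective (seg s).
Proof. by move=> x y /(congr1 val); rewrite !val_seg => /addnI /val_inj. Qed.

Lemma seg_num_seg s x : seg_num (seg s x) = s.
Proof. by rewrite /seg_num /unseg /seg cast_ordK divord_idx. Qed.

Lemma seg_off_seg s x : seg_off (seg s x) = x.
Proof. by rewrite /seg_off /unseg /seg cast_ordK modord_idx. Qed.

Lemma seg_divmod k : seg (seg_num k) (seg_off k) = k.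
Proof. by rewrite /seg idx_divmod cast_ordKV. Qed.

Definition pair_pos (b : 'I_2) (p : 'I_(m * n)) : 'I_(2 * m * n) :=
  cast_ord (mulnA 2 m n) (idx p b).

Lemma pair_pos_inj b : injective (pair_pos b).
Proof.
by move=> p q /(congr1 val) /= /addIn /eqP; rewrite eqn_pmul2l // => /eqP/val_inj.
Qed.

Definition shuffle_fun (p : 'I_(m * n)) : 'I_(m * n) :=
  cast_ord (mulnC n m) (swap_ord p).

Lemma shuffle_inj : injective shuffle_fun.
Proof. exact: inj_comp (@cast_ord_inj _ _ _) (can_inj (@swap_ordK m n)). Qed.

Definition shuffle : {perm 'I_(m * n)} := perm shuffle_inj.

Definition tau : {perm 'I_(2 * m * n)} :=
  (ext_perm (@pair_pos_inj ord0) shuffle * ext_perm (@pair_pos_inj ord_max) shuffle)%g.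

Lemma tau_pair_pos b p : tau (pair_pos b p) = pair_pos b (shuffle p).
Proof.
have other_parity b1 b2 q : b2 != b1 -> pair_pos b1 q \notin codom (pair_pos b2).
  move=> neq; apply/codomP => -[q' /(congr1 val) /= E].
  by move: neq; have := ltn_ord b1; have := ltn_ord b2; rewrite -val_eqE /=; lia.
have [->|->] : b = ord0 \/ b = ord_max.
  by case: b {other_parity} => [[|[|//]] ?]; [left|right]; apply: val_inj.
- rewrite permM ext_permE ext_perm_out //.
  exact (other_parity ord0 ord_max (shuffle p) isT).
- rewrite permM [X in ext_perm _ _ X]ext_perm_out ?ext_permE //.
  exact (other_parity ord_max ord0 p isT).
Qed.

Lemma tau_idx (i : 'I_n) (s : 'I_m) (b : 'I_2) :
  tau (idx i (idx s b)) = seg s (idx i b).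
Proof.
have -> : idx i (idx s b) = pair_pos b (idx i s) by apply: val_inj => /=; lia.
rewrite tau_pair_pos permE /shuffle_fun /swap_ord divord_idx modord_idx.
by apply: val_inj => /=; lia.
Qed.

Lemma odd_tau : odd_perm tau = false.
Proof. by rewrite odd_permM !odd_ext_perm addbb. Qed.

Definition Phi (sig : {ffun 'I_m -> {perm 'I_(2 * n)}}) : {perm 'I_(2 * m * n)} :=
  (tau * \prod_(s < m) ext_perm (@seg_inj s) (sig s))%g.

Lemma Phi_idx sig (i : 'I_n) (s : 'I_m) (b : 'I_2) :
  Phi sig (idx i (idx s b)) = seg s (sig s (idx i b)).
Proof.
rewrite permM tau_idx (@perm_prod_blockwise _ _ seg_num) ?index_enum_uniq //.
- by rewrite seg_num_seg mem_index_enum ext_permE.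
- move=> s' k neq; rewrite ext_perm_out //.
  by apply: contra neq => /codomP[x ->]; rewrite seg_num_seg.
- move=> s' k; have [/codomP[x ->]|k_out] := boolP (k \in codom (seg s')).
    by rewrite ext_permE !seg_num_seg.
  by rewrite ext_perm_out.
Qed.

Lemma psgn_Phi (R : nzRingType) sig :
  psgn R (Phi sig) = (\prod_(s < m) psgn R (sig s))%R.
Proof.
rewrite psgnM {1}/psgn odd_tau expr0 mul1r (big_morph _ (@psgnM R _) (@psgn1 R _)).
by apply: eq_bigr => s _; rewrite /psgn odd_ext_perm.
Qed.

Lemma Phi_inj : injective Phi.
Proof.
move=> sig1 sig2 E; apply/ffunP => s; apply/permP => x.
by rewrite -(idx_divmod x); apply: (@seg_inj s); rewrite -!Phi_idx E.
Qed.

Lemma blockInc_Phi (sig : {ffun 'I_m -> {perm 'I_(2 * n)}}) :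
  [forall s, blockInc (sig s)] -> blockInc (Phi sig).
Proof.
move=> /forallP sig_inc; apply/blockIncP => i j1 j2.
rewrite -(idx_divmod j1) -(idx_divmod j2).
move: (divord j1) (modord j1) (divord j2) (modord j2) => s1 b1 s2 b2 /= lt12.
rewrite !Phi_idx !val_seg; have := ltn_ord b1; have := ltn_ord b2.
have := ltn_ord (sig s1 (idx i b1)); have := ltn_ord (sig s2 (idx i b2)).
case: (ltngtP s1 s2) => [lt_s|gt_s|/val_inj eq_s]; last first.
- subst s2; have lt_b : b1 < b2 by lia.
  move/blockIncP/(_ i b1 b2 lt_b): (sig_inc s1); lia.
- lia.
- have : 2 * n * s1.+1 <= 2 * n * s2 by rewrite leq_mul2l lt_s orbT.
  lia.
Qed.

Definition in_segments (g : {ffun 'I_(2 * m) -> 'I_(2 * m * n)})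
    (r : {ffun 'I_(2 * m) -> 'I_(2 * n)}) : Prop :=
  forall (s : 'I_m) (b : 'I_2), g (idx s b) = seg s (r (idx s b)) :> nat.

Lemma in_segments_Phi sig (i : 'I_n) :
  in_segments (block (Phi sig) i) [ffun k => sig (divord k) (idx i (modord k))].
Proof. by move=> s b; rewrite !ffunE Phi_idx divord_idx modord_idx. Qed.

Lemma Phi_surj (sg : {perm 'I_(2 * m * n)}) :
  blockInc sg -> (forall i, exists r, in_segments (block sg i) r) ->
  exists2 sig : {ffun 'I_m -> {perm 'I_(2 * n)}},
    [forall s, blockInc (sig s)] & sg = Phi sig.
Proof.
move=> /blockIncP sg_inc sg_seg.
have sg_segE i s b : sg (idx i (idx s b)) = seg s (seg_off (sg (idx i (idx s b)))).
  by have [r /(_ s b)] := sg_seg i; rewrite ffunE => /val_inj ->; rewrite seg_off_seg.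
pose f s (x : 'I_(2 * n)) := seg_off (sg (idx (divord x) (idx s (modord x)))).
have f_inj s : injective (f s).
  move=> x y /(congr1 (seg s)); rewrite /f -!sg_segE => /perm_inj E.
  rewrite -(idx_divmod x) -(idx_divmod y); congr idx.
  - by have := congr1 (@divord _ _) E; rewrite !divord_idx.
  - by have := congr1 (@modord _ _ \o @modord _ _) E; rewrite /= !modord_idx.
exists [ffun s => perm (f_inj s)].
- apply/forallP => s; apply/blockIncP => i b1 b2 lt12.
  rewrite !ffunE !permE /f !divord_idx !modord_idx.
  have /(sg_inc i) : idx s b1 < idx s b2 by rewrite /=; lia.
  by rewrite [in X in X < _ -> _]sg_segE [in X in _ < X -> _]sg_segE !val_seg ltn_add2l.
- apply/permP => k; rewrite -(idx_divmod k) -(idx_divmod (modord k)).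
  by rewrite Phi_idx ffunE permE /f divord_idx modord_idx -sg_segE.
Qed.

End Segments.

Arguments Phi {m n} sig.

Section BPfTerms.
Local Open Scope ring_scope.
Variables (R : comNzRingType) (m n : nat).
Variables (B : {ffun 'I_(2 * m) -> 'I_(2 * n)} -> R)
          (M : {ffun 'I_(2 * m) -> 'I_(2 * m * n)} -> R).
Hypothesis M_seg : forall (g : {ffun 'I_(2 * m) -> 'I_(2 * m * n)}) r,
  {homo g : k l / (k < l)%N} -> in_segments g r -> M g = B r.
Hypothesis M_out : forall g : {ffun 'I_(2 * m) -> 'I_(2 * m * n)},
  {homo g : k l / (k < l)%N} -> ~ (exists r, in_segments g r) -> M g = 0.

Lemma BPf_term_Phi (sig : {ffun 'I_m -> {perm 'I_(2 * n)}}) :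
  [forall s, blockInc (sig s)] ->
  psgn R (Phi sig) * \prod_(i < n) M (block (Phi sig) i) =
  (\prod_(s < m) psgn R (sig s)) *
  \prod_(i < n) B [ffun k => sig (divord k) (idx i (modord k))].
Proof.
move=> sig_inc; rewrite psgn_Phi; congr (_ * _); apply: eq_bigr => i _.
apply: M_seg; last exact: in_segments_Phi.
exact/block_increasing/blockInc_Phi.
Qed.

Lemma BPf_term_vanishes (sg : {perm 'I_(2 * m * n)}) : blockInc sg ->
  sg \notin Phi @: [set sig : {ffun 'I_m -> _} | [forall s, blockInc (sig s)]] ->
  psgn R sg * \prod_(i < n) M (block sg i) = 0.
Proof.
move=> sg_inc sg_out.
have [i i_out] : exists i, ~ exists r, in_segments (block sg i) r.
  apply: NNPP => all_seg.
  have [sig sig_inc sgPhi] := Phi_surj sg_inc (not_ex_not_all _ _ all_seg).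
  by rewrite sgPhi imset_f ?inE in sg_out.
by rewrite (bigD1 i) //= M_out ?mul0r ?mulr0 //; apply: block_increasing.
Qed.

End BPfTerms.

Local Open Scope ring_scope.

Theorem proposition6p1 (R : fieldType) (m n : nat) (hm : (0 < m)%N) (hn : (0 < n)%N)
  (B : {ffun 'I_(2 * m) -> 'I_(2 * n)} -> R)
  (M : {ffun 'I_(2 * m) -> 'I_((2 * m) * n)} -> R)
  (hB : forall (f : {ffun 'I_(2 * m) -> 'I_(2 * n)}) (s : 'I_m),
     B [ffun k => f (tperm (idx s ord0) (idx s ord_max) k)] = - B f)
  (hManti : forall (g : {ffun 'I_(2 * m) -> 'I_((2 * m) * n)}) (tau : {perm 'I_(2 * m)}),
     M [ffun k => g (tau k)] = psgn R tau * M g)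
  (hMval : forall g : {ffun 'I_(2 * m) -> 'I_((2 * m) * n)},
     (forall k l : 'I_(2 * m), (k < l)%N -> (g k < g l)%N) ->
     (forall r : {ffun 'I_(2 * m) -> 'I_(2 * n)},
        (forall s : 'I_m, forall b : 'I_2,
           nat_of_ord (g (idx s b)) = (2 * n * s + r (idx s b))%N) ->
        M g = B r) /\
     ((~ exists r : {ffun 'I_(2 * m) -> 'I_(2 * n)},
        forall s : 'I_m, forall b : 'I_2,
           nat_of_ord (g (idx s b)) = (2 * n * s + r (idx s b))%N) ->
      M g = 0)) :
  Pf2m B = BPf2m M.
Proof.
have M_seg g r g_incr : in_segments g r -> M g = B r := proj1 (hMval g g_incr) r.
have M_out g g_incr : ~ (exists r, in_segments g r) -> M g = 0 := proj2 (hMval g g_incr).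
pose A := [set sig : {ffun 'I_m -> {perm 'I_(2 * n)}} | [forall s, blockInc (sig s)]].
rewrite /Pf2m /BPf2m; congr (_ * _).
rewrite (bigID (mem (Phi @: A))) /= [X in _ + X]big1 ?addr0 =>
  [|sg /andP[sg_inc sg_out]]; last exact: (BPf_term_vanishes M_out).
rewrite (eq_bigl (mem (Phi @: A))) => [|sg]; last first.
  apply: andb_idl => /imsetP[sig sig_inc ->].
  by apply: blockInc_Phi; rewrite /A inE in sig_inc.
rewrite big_imset => [|sig1 sig2 _ _]; last exact: Phi_inj.
apply: eq_big => [sig|sig sig_inc]; first by rewrite /A inE.
by symmetry; apply: BPf_term_Phi.
Qed.
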